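(* Let $X \in \mathbb{R}^{n\times p}$, let $I \subset \{1,\ldots,p\}$ be an index set with complement $I^c = \{1,\ldots,p\}\setminus I$, and suppose $W \in \mathbb{R}^{p\times p}$ satisfies $W_{I^c} = 0$ (i.e., every row of $W$ with index in $I^c$ is zero). Then $$\|X - X W W^{+}\|_F > \|X - X^{I} (X^{I})^{+} X\|_F,$$ unless $\mathcal{L}_{\mathrm{col}}(X^{I}) \perp \mathcal{L}_{\mathrm{col}}(X^{I^c})$, in which case $\|X - X W W^{+}\|_F \ge \|X - X^{I} (X^{I})^{+} X\|_F$ holds.
   Context: For a matrix $A$ and an index set $J$, $A_{J}$ denotes the submatrix of $A$ consisting of the rows indexed by $J$, and $A^{J}$ denotes the submatrix consisting of the columns indexed by $J$. $A^{+}$ denotes the Moore–Penrose pseudoinverse of $A$, $\|\cdot\|_F$ the Frobenius norm, and $\mathcal{L}_{\mathrm{col}}(A)$ the column space of $A$. Two subspaces are written $\perp$ when they are orthogonal. *)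

From HB Require Import structures.
From mathcomp Require Import all_boot all_order all_algebra.
Set Implicit Arguments. Unset Strict Implicit. Unset Printing Implicit Defensive.
Import Order.TTheory GRing.Theory Num.Theory.
Local Open Scope ring_scope.

Definition frob (R : rcfType) (m n : nat) (A : 'M[R]_(m, n)) : R :=
  Num.sqrt (\sum_(i < m) \sum_(j < n) A i j ^+ 2).

(* B is the Moore-Penrose pseudoinverse of A (the four Penrose conditions;
   it exists and is unique). *)
Definition is_pinv (R : rcfType) (m n : nat) (A : 'M[R]_(m, n)) (B : 'M[R]_(n, m))
  : Prop :=
  [/\ A *m B *m A = A, B *m A *m B = B,
      (A *m B)^T = A *m B & (B *m A)^T = B *m A].

(* A^J : the submatrix of the columns of A indexed by J (in increasing order). *)
Definition colsJ (R : Type) (m n : nat) (A : 'M[R]_(m, n)) (J : {set 'I_n})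
  : 'M[R]_(m, #|J|) :=
  colsub (fun k : 'I_#|J| => enum_val k) A.

Definition in_colspace (R : rcfType) (m n : nat) (A : 'M[R]_(m, n)) (x : 'cV[R]_m)
  : Prop := exists u : 'cV[R]_n, x = A *m u.

Definition colspace_orth (R : rcfType) (m n1 n2 : nat)
  (A : 'M[R]_(m, n1)) (B : 'M[R]_(m, n2)) : Prop :=
  forall x y : 'cV[R]_m, in_colspace A x -> in_colspace B y -> x^T *m y = 0.

From mathcomp Require Import all_boot all_order all_algebra.
Import Order.TTheory GRing.Theory Num.Theory.
Set Implicit Arguments. Unset Strict Implicit. Unset Printing Implicit Defensive.
Local Open Scope ring_scope.

(* With P := X^I (X^I)^+ and Q := W W^+, both are orthogonal projectors, and
   since the rows and (by symmetry) the columns of Q outside I vanish, the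
   columns of X Q lie in the column space of X^I, so P X Q = X Q.  Hence
   X - X Q = (X - P X) + (P X - X Q) is an orthogonal decomposition and
   Pythagoras gives the weak inequality.  Equality forces P X = X Q, whose
   columns outside I vanish, i.e. P X^{I^c} = 0, which makes the column spaces
   of X^I = P X^I and X^{I^c} orthogonal. *)

Section FrobeniusSquare.
Variable R : rcfType.

Definition sqfrob (m n : nat) (A : 'M[R]_(m, n)) : R :=
  \sum_(i < m) \sum_(j < n) A i j ^+ 2.

Lemma sqfrob_ge0 m n (A : 'M[R]_(m, n)) : 0 <= sqfrob A.
Proof. by apply: sumr_ge0 => i _; apply: sumr_ge0 => j _; apply: sqr_ge0. Qed.

Lemma sqfrob_gt0 m n (A : 'M[R]_(m, n)) : A != 0 -> 0 < sqfrob A.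
Proof.
move=> nzA; rewrite lt_def sqfrob_ge0 andbT; apply: contraNneq nzA => A0.
apply/eqP/matrixP => i j; rewrite mxE; apply/eqP; rewrite -sqrf_eq0.
have row0 := psumr_eq0P (fun i _ => sumr_ge0 _ (fun j _ => sqr_ge0 (A i j))) A0.
have entry0 := psumr_eq0P (fun j _ => sqr_ge0 (A i j)) (row0 i isT).
by rewrite entry0.
Qed.

Lemma sqfrob_tr m n (A : 'M[R]_(m, n)) : sqfrob A = \tr (A^T *m A).
Proof.
rewrite /sqfrob /mxtrace exchange_big; apply: eq_bigr => j _.
by rewrite mxE; apply: eq_bigr => i _; rewrite !mxE expr2.
Qed.

Lemma sqfrobD_orth m n (A B : 'M[R]_(m, n)) :
  A^T *m B = 0 -> sqfrob (A + B) = sqfrob A + sqfrob B.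
Proof.
move=> AB0; have BA0 : B^T *m A = 0 by rewrite -[A]trmxK -trmx_mul AB0 trmx0.
by rewrite !sqfrob_tr [(A + B)^T]linearD /= mulmxDl !mulmxDr AB0 BA0 addr0 add0r mxtraceD.
Qed.

Lemma ler_frob m n (A B : 'M[R]_(m, n)) :
  (frob A <= frob B) = (sqfrob A <= sqfrob B).
Proof. exact/ler_sqrt/sqfrob_ge0. Qed.

Lemma ltr_frob m n (A B : 'M[R]_(m, n)) :
  0 < sqfrob B -> (frob A < frob B) = (sqfrob A < sqfrob B).
Proof. exact: ltr_sqrt. Qed.

End FrobeniusSquare.

Section OrthogonalProjector.
Variables (R : rcfType) (m : nat) (P : 'M[R]_m).
Hypotheses (P_sym : P^T = P) (P_idem : P *m P = P).

Lemma proj_residual_orth n1 n2 (M : 'M[R]_(m, n1)) (N : 'M[R]_(m, n2)) :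
  (M - P *m M)^T *m (P *m N) = 0.
Proof.
rewrite linearB /= trmx_mul P_sym mulmxBl !mulmxA -(mulmxA _ P P) P_idem.
by rewrite subrr.
Qed.

Lemma sqfrob_proj_split n (M N : 'M[R]_(m, n)) : P *m N = N ->
  sqfrob (M - N) = sqfrob (M - P *m M) + sqfrob (P *m M - N).
Proof.
move=> PN; rewrite -sqfrobD_orth ?addrA ?subrK //.
by rewrite -PN -mulmxBr proj_residual_orth.
Qed.

End OrthogonalProjector.

Section PseudoinverseProjector.
Variables (R : rcfType) (m n : nat) (A : 'M[R]_(m, n)) (B : 'M[R]_(n, m)).
Hypothesis AB : is_pinv A B.

Lemma pinv_proj_sym : (A *m B)^T = A *m B.
Proof. by case: AB. Qed.

Lemma pinv_proj_idem : (A *m B) *m (A *m B) = A *m B.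
Proof. by case: AB => ABA _ _ _; rewrite mulmxA ABA. Qed.

Lemma pinv_proj_range k (M : 'M[R]_(n, k)) : A *m B *m (A *m M) = A *m M.
Proof. by case: AB => ABA _ _ _; rewrite mulmxA ABA. Qed.

End PseudoinverseProjector.

Section ColumnSubmatrices.
Variables (R : rcfType) (m n : nat).

Lemma colsJ_mull k (M : 'M[R]_(k, m)) (X : 'M[R]_(m, n)) (J : {set 'I_n}) :
  colsJ (M *m X) J = M *m colsJ X J.
Proof. by apply/matrixP => i j; rewrite !mxE; apply: eq_bigr => l _; rewrite !mxE. Qed.

Lemma colsJ_eq0 k (Q : 'M[R]_(k, n)) (J : {set 'I_n}) :
  (forall i j, j \in J -> Q i j = 0) -> colsJ Q J = 0.
Proof. by move=> Q0; apply/matrixP => i j; rewrite !mxE Q0 ?enum_valP. Qed.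

Lemma mulmx_row_supported k (X : 'M[R]_(m, n)) (Q : 'M[R]_(n, k)) (I : {set 'I_n}) :
  (forall i j, i \notin I -> Q i j = 0) ->
  X *m Q = colsJ X I *m rowsub (fun l : 'I_#|I| => enum_val l) Q.
Proof.
move=> Q0; apply/matrixP => r c; rewrite !mxE (bigID (mem I)) /=.
rewrite [X in _ + X]big1 ?addr0 => [|i /Q0 ->]; last by rewrite mulr0.
by rewrite big_enum_val; apply: eq_bigr => l _; rewrite !mxE.
Qed.

Lemma colspace_orth_trmx_mul k1 k2 (A : 'M[R]_(m, k1)) (B : 'M[R]_(m, k2)) :
  A^T *m B = 0 -> colspace_orth A B.
Proof.
by move=> AB0 x y [u ->] [v ->]; rewrite trmx_mul -mulmxA (mulmxA A^T) AB0 mul0mx mulmx0.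
Qed.

End ColumnSubmatrices.

Theorem theorem3 (R : rcfType) (n p : nat) (X : 'M[R]_(n, p)) (I : {set 'I_p})
  (W : 'M[R]_p) (Wp : 'M[R]_p) (XIp : 'M[R]_(#|I|, n)) :
  (forall (i : 'I_p) (j : 'I_p), i \notin I -> W i j = 0) ->
  is_pinv W Wp ->
  is_pinv (colsJ X I) XIp ->
  (~ colspace_orth (colsJ X I) (colsJ X (~: I)) ->
     frob (X - X *m W *m Wp) > frob (X - colsJ X I *m XIp *m X)) /\
  (colspace_orth (colsJ X I) (colsJ X (~: I)) ->
     frob (X - X *m W *m Wp) >= frob (X - colsJ X I *m XIp *m X)).
Proof.
move=> W0 pinvW pinvXI; rewrite -[X *m W *m Wp]mulmxA.
set P := colsJ X I *m XIp; set Q := W *m Wp.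
have Q_rows0 i j : i \notin I -> Q i j = 0.
  by move=> iNI; rewrite mxE big1 // => k _; rewrite W0 ?mul0r.
have Q_cols0 i j : j \notin I -> Q i j = 0.
  have Q_sym : Q^T = Q := pinv_proj_sym pinvW.
  by move=> jNI; rewrite -Q_sym mxE Q_rows0.
have PXQ : P *m (X *m Q) = X *m Q.
  by rewrite (mulmx_row_supported _ Q_rows0) pinv_proj_range.
have pythagoras := sqfrob_proj_split (pinv_proj_sym pinvXI) (pinv_proj_idem pinvXI) X PXQ.
split; last first.
  by move=> _; rewrite ler_frob pythagoras lerDl sqfrob_ge0.
have [PX_XQ | PX_neq] := eqVneq (P *m X) (X *m Q); last first.
  have gap : 0 < sqfrob (P *m X - X *m Q) by rewrite sqfrob_gt0 ?subr_eq0.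
  by move=> _; rewrite ltr_frob pythagoras ?ltrDl // ltr_wpDl ?sqfrob_ge0.
have P_XIc : P *m colsJ X (~: I) = 0.
  rewrite -colsJ_mull PX_XQ colsJ_mull colsJ_eq0 ?mulmx0 // => i j.
  by rewrite in_setC; exact: Q_cols0.
case; apply: colspace_orth_trmx_mul.
have [PXI _ _ _] := pinvXI.
by rewrite -{1}PXI trmx_mul (pinv_proj_sym pinvXI) -mulmxA -/P P_XIc mulmx0.
Qed.
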